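(* (1) For each $p\ge 3$ there is an instance with $p$ binary attributes and $k=2$ such that the set of committees optimal for $\|\cdot\|_1$ and the set of committees optimal for $\|\cdot\|_{\max}$ are disjoint. (2) For each $p\ge 3$ there is an instance with $p$ attributes such that the set of committees optimal for $\|\cdot\|_{\max}$ and the set of committees optimal for $\|\cdot\|_{1,\max}$ are disjoint. (3) For each $p\ge 2$ there is an instance with $p$ attributes, at least one of which has a domain with $4$ values, such that the set of committees optimal for $\|\cdot\|_1$ and the set of committees optimal for $\|\cdot\|_{1,\max}$ are disjoint. (4) There is an instance with $p=2$ binary attributes such that the set of committees optimal for $\|\cdot\|_1$ differs from the set of committees optimal for $\|\cdot\|_{\max}$.
   Context: An instance consists of attributes $X_1,\dots,X_p$, each $X_i$ with finite domain $D_i=\{x_i^1,\dots,x_i^{q_i}\}$ (binary means $|D_i|=2$); a candidate database, i.e. a finite set $C$ in which each candidate $c$ has a value vector $(X_1(c),\dots,X_p(c))\in D_1\times\dots\times D_p$ (different candidates may share a vector); a target distribution $\pi=(\pi_1,\dots,\pi_p)$ with $\pi_i=(\pi_i^1,\dots,\pi_i^{q_i})$ nonnegative reals summing to $1$; and an integer $k\in\{1,\dots,|C|\}$. For $A\subseteq C$ with $|A|=k$, $r_i^j(A)=|\{c\in A: X_i(c)=x_i^j\}|/k$. Loss functions: $\|\pi,r(A)\|_1=\sum_{i,j}|r_i^j(A)-\pi_i^j|$; $\|\pi,r(A)\|_{1,\max}=\sum_i\max_j|r_i^j(A)-\pi_i^j|$; $\|\pi,r(A)\|_{\max}=\max_{i,j}|r_i^j(A)-\pi_i^j|$.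 A committee of size $k$ is optimal for a loss $f$ if it minimizes $f(\pi,r(A))$ over all $k$-element subsets of $C$. *)

From HB Require Import structures.
From mathcomp Require Import all_boot all_order all_algebra.
From mathcomp Require Import reals.
Import Order.TTheory GRing.Theory Num.Theory.
Local Open Scope ring_scope.

(* An instance with p attributes X_0..X_{p-1}; attribute i has domain
   'I_(q i) (values x_i^1..x_i^{q i} are indexed 0..q i - 1); the candidate
   database is 'I_ncand (candidates may share value vectors); X i c is the
   value of attribute i for candidate c; target is the target distribution pi;
   k the committee size with 1 <= k <= |C|. *)
Record instance (R : realFieldType) (p : nat) := Instance {
  q : 'I_p -> nat;
  ncand : nat;
  X : forall i : 'I_p, 'I_ncand -> 'I_(q i);
  target : forall i : 'I_p, 'I_(q i) -> R;
  target_ge0 : forall i j, 0 <= target i j;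
  target_sum1 : forall i, \sum_(j < q i) target i j = 1;
  k : nat;
  k_ge1 : (1 <= k)%N;
  k_le : (k <= ncand)%N
}.

Arguments q {R p}.
Arguments ncand {R p}.
Arguments X {R p} _ _ _.
Arguments target {R p} _ _ _.
Arguments k {R p}.

Section Losses.
Variables (R : realFieldType) (p : nat) (I : instance R p).

Definition ratio (A : {set 'I_(ncand I)}) (i : 'I_p) (j : 'I_(q I i)) : R :=
  (#|[set c in A | X I i c == j]|)%:R / (k I)%:R.

Definition dev A i j : R := `|ratio A i j - target I i j|.

Definition loss1 A : R := \sum_(i < p) \sum_(j < q I i) dev A i j.
(* ||target, r(A)||_{1,max}  (max of nonnegative reals, 0 as neutral) *)
Definition loss1max A : R :=
  \sum_(i < p) \big[Num.max/0]_(j < q I i) dev A i j.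
Definition lossmax A : R :=
  \big[Num.max/0]_(i < p) \big[Num.max/0]_(j < q I i) dev A i j.

Definition is_committee (A : {set 'I_(ncand I)}) : Prop := #|A| = k I.

Definition optimal (f : {set 'I_(ncand I)} -> R) (A : {set 'I_(ncand I)}) : Prop :=
  is_committee A /\ forall B, is_committee B -> f A <= f B.

Definition binary_instance : Prop := forall i, q I i = 2%N.
End Losses.

Arguments ratio {R p} I A i j.
Arguments dev {R p} I A i j.
Arguments loss1 {R p} I A.
Arguments loss1max {R p} I A.
Arguments lossmax {R p} I A.
Arguments is_committee {R p} I A.
Arguments optimal {R p} I f A.
Arguments binary_instance {R p} I.

From Pilot Require Import Defs.
From HB Require Import structures.
From mathcomp Require Import all_boot all_order all_algebra.
From mathcomp Require Import reals.
From mathcomp Require Import lra.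
Import Order.TTheory GRing.Theory Num.Theory.
Local Open Scope ring_scope.

(* Take three candidates, two of which (the twins) share a value vector, and
   committee size 2.  As far as its ratios go, a committee is determined by
   whether it contains the third candidate, and every loss is a function of the
   ratios, so each loss only compares the twin pair {0, 1} with the mixed pair
   {1, 2}.  In the binary instance attribute 0 asks for the value of the third
   candidate and every other attribute for the value of the twins; under the
   1-, max- and (1,max)-losses the twin pair costs 2, 1, 1 and the mixed pair
   p, 1/2, p/2, which separates the losses for p >= 3 and, for p = 2, makes the
   1-loss tie where the max-loss does not.  In the quaternary instance the
   1-loss prefers the twin pair (15/8 against 17/8) while the (1,max)-loss
   prefers the mixed pair (at most 13/16 against at least 15/16). *)

Lemma bigmax_cst d (T : orderType d) (x c : T) n :
  (x <= c)%O -> \big[Order.max/x]_(i < n.+1) c = c.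
Proof.
move=> xc; apply/le_anti; rewrite bigmax_le //=.
exact: (le_bigmax _ (fun=> c) ord0).
Qed.

Section RatioProfiles.
Variables (R : realFieldType) (p : nat) (I : instance R p).

Definition same_ratios (A B : {set 'I_(ncand I)}) : Prop :=
  forall i j, Defs.ratio I A i j = Defs.ratio I B i j.

Definition ratio_determined (f : {set 'I_(ncand I)} -> R) : Prop :=
  forall A B, same_ratios A B -> f A = f B.

Lemma dev_same_ratios A B i j : same_ratios A B -> dev I A i j = dev I B i j.
Proof. by move=> AB; rewrite /dev AB. Qed.

Lemma loss1_ratio_determined : ratio_determined (loss1 I).
Proof.
move=> A B AB; apply: eq_bigr => i _; apply: eq_bigr => j _.
exact: dev_same_ratios.
Qed.

Lemma loss1max_ratio_determined : ratio_determined (loss1max I).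
Proof.
move=> A B AB; apply: eq_bigr => i _; apply: eq_bigr => j _.
exact: dev_same_ratios.
Qed.

Lemma lossmax_ratio_determined : ratio_determined (lossmax I).
Proof.
move=> A B AB; apply: eq_bigr => i _; apply: eq_bigr => j _.
exact: dev_same_ratios.
Qed.

Variables B C : {set 'I_(ncand I)}.
Hypotheses (B_committee : is_committee I B) (C_committee : is_committee I C).
Hypothesis two_profiles :
  forall A, is_committee I A -> same_ratios A B \/ same_ratios A C.

Lemma optimal_of_two_profiles f :
  ratio_determined f -> f B <= f C -> optimal I f B.
Proof.
move=> f_det BC; split=> // A /two_profiles [] /f_det ->; first exact: lexx.
exact: BC.
Qed.

Lemma optimal_two_profiles_disjoint f g :
  ratio_determined f -> ratio_determined g -> f B < f C -> g C < g B ->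
  forall A, ~ (optimal I f A /\ optimal I g A).
Proof.
move=> f_det g_det fBC gCB A [[A_com f_opt] [_ g_opt]].
have fAB := f_opt B B_committee; have gAC := g_opt C C_committee.
case: (two_profiles _ A_com) => AB; move: fAB gAC; rewrite (f_det _ _ AB) (g_det _ _ AB).
- by rewrite (leNgt (g B)) gCB.
- by rewrite (leNgt (f C)) fBC.
Qed.

End RatioProfiles.

Arguments same_ratios {R p} I A B.
Arguments optimal_of_two_profiles {R p I B C} B_committee two_profiles f.
Arguments optimal_two_profiles_disjoint {R p I B C}
  B_committee C_committee two_profiles f g.
Arguments ratio_determined {R p} I f.

Section PointMass.
Variable R : realFieldType.

Definition point_mass {n} (y j : 'I_n) : R := (j == y)%:R.

Lemma point_mass_ge0 n (y j : 'I_n) : 0 <= point_mass y j.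
Proof. exact: ler0n. Qed.

Lemma point_mass_sum1 n (y : 'I_n) : \sum_j point_mass y j = 1.
Proof.
by rewrite (bigD1 y) //= /point_mass eqxx big1 ?addr0 // => j /negbTE ->.
Qed.

End PointMass.

Arguments point_mass {R n} y j.
Arguments point_mass_ge0 {R n} y j.
Arguments point_mass_sum1 {R n} y.

Section TwinInstance.
Variables (R : realFieldType) (p : nat) (q : 'I_p -> nat).
Variables (xt xo : forall i, 'I_(q i)) (t : forall i, 'I_(q i) -> R).
Hypotheses (t_ge0 : forall i j, 0 <= t i j)
           (t_sum1 : forall i, \sum_(j < q i) t i j = 1).

Definition twin_instance : instance R p :=
  @Instance R p q 3 (fun i c => if c == ord_max then xo i else xt i)
    t t_ge0 t_sum1 2 isT isT.

Lemma twin_ratio A i j : Defs.ratio twin_instance A i j =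
  (((ord_max \in A) && (xo i == j)) + #|A :\ ord_max| * (xt i == j))%:R / 2.
Proof.
rewrite /Defs.ratio (cardsD1 ord_max) /= !inE eqxx /=.
have -> : [set c in A | (if c == ord_max then xo i else xt i) == j] :\ ord_max
          = if xt i == j then A :\ ord_max else set0.
  apply/setP => c; have [->|/negbTE nc] := eqVneq c ord_max.
    by case: (xt i == j); rewrite !inE eqxx.
  by rewrite !inE nc /=; case: (xt i == j); rewrite ?inE ?nc ?andbT ?andbF.
by case: (xt i == j); rewrite ?cards0 ?muln0 ?muln1.
Qed.

Lemma twin_committee_ratio A i j : is_committee twin_instance A ->
  Defs.ratio twin_instance A i j =
  (((ord_max \in A) && (xo i == j)) + (2 - (ord_max \in A)) * (xt i == j))%:R / 2.
Proof.
rewrite /is_committee (cardsD1 ord_max) twin_ratio /= => cardA.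
by rewrite -[X in (X - _)%N]cardA addKn.
Qed.

Lemma twin_same_ratios A B :
  is_committee twin_instance A -> is_committee twin_instance B ->
  (ord_max \in A) = (ord_max \in B) -> same_ratios twin_instance A B.
Proof.
by move=> A_com B_com AB i j; rewrite !twin_committee_ratio // AB.
Qed.

Definition twin_pair : {set 'I_3} := [set~ ord_max].
Definition mixed_pair : {set 'I_3} := [set~ ord0].

Lemma twin_pair_committee : is_committee twin_instance twin_pair.
Proof. by rewrite /is_committee cardsC1 card_ord. Qed.

Lemma mixed_pair_committee : is_committee twin_instance mixed_pair.
Proof. by rewrite /is_committee cardsC1 card_ord. Qed.

Lemma twin_two_profiles A : is_committee twin_instance A ->
  same_ratios twin_instance A twin_pair \/ same_ratios twin_instance A mixed_pair.
Proof.
move=> A_com; case oA: (ord_max \in A); [right|left].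
  by apply: (twin_same_ratios _ _ A_com mixed_pair_committee); rewrite oA !inE.
by apply: (twin_same_ratios _ _ A_com twin_pair_committee); rewrite oA !inE eqxx.
Qed.

Lemma dev_twin_pair i j :
  dev twin_instance twin_pair i j = `|(xt i == j)%:R - t i j|.
Proof.
rewrite /dev twin_committee_ratio; last exact: twin_pair_committee.
by rewrite /twin_pair setC11 /= subn0 natrM mulrC mulKf ?pnatr_eq0.
Qed.

Lemma dev_mixed_pair i j : dev twin_instance mixed_pair i j =
  `|((xo i == j) + (xt i == j))%:R / 2 - t i j|.
Proof.
rewrite /dev twin_committee_ratio; last exact: mixed_pair_committee.
by rewrite /mixed_pair in_setC1 /= mul1n.
Qed.

Lemma dev_twin_consensus A i j : is_committee twin_instance A ->
  xo i = xt i -> t i =1 point_mass (xt i) -> dev twin_instance A i j = 0.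
Proof.
move=> A_com xo_xt t_pm; rewrite /dev twin_committee_ratio // xo_xt /= t_pm /point_mass.
have -> : ((ord_max \in A) && (xt i == j) + (2 - (ord_max \in A)) * (xt i == j)
          = 2 * (xt i == j))%N by case: (_ \in A); case: (_ == j).
by rewrite natrM mulrC mulKf ?pnatr_eq0 // eq_sym subrr normr0.
Qed.

Lemma twin_pair_optimal f : ratio_determined twin_instance f ->
  f twin_pair <= f mixed_pair -> optimal twin_instance f twin_pair.
Proof.
exact: optimal_of_two_profiles twin_pair_committee twin_two_profiles f.
Qed.

Lemma twin_optimal_disjoint f g :
  ratio_determined twin_instance f -> ratio_determined twin_instance g ->
  f twin_pair < f mixed_pair -> g mixed_pair < g twin_pair ->
  forall A, ~ (optimal twin_instance f A /\ optimal twin_instance g A).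
Proof.
exact: optimal_two_profiles_disjoint twin_pair_committee mixed_pair_committee
  twin_two_profiles f g.
Qed.

End TwinInstance.

Arguments twin_instance {R p q} xt xo t t_ge0 t_sum1.
Arguments mixed_pair_committee {R p q xt xo t t_ge0 t_sum1}.
Arguments twin_pair_optimal {R p q xt xo t t_ge0 t_sum1} f.
Arguments twin_optimal_disjoint {R p q xt xo t t_ge0 t_sum1} f g.

Section BinaryTwinInstance.
Variables (R : realFieldType) (p : nat).

Definition binary_target (i : 'I_p) : 'I_2 -> R :=
  point_mass (if val i == 0%N then ord_max else ord0).

Definition binary_twin_instance : instance R p :=
  twin_instance (q := fun=> 2%N) (fun=> ord0) (fun=> ord_max) binary_target
    (fun=> point_mass_ge0 _) (fun=> point_mass_sum1 _).

Lemma binary_dev_twin_pair i j :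
  dev binary_twin_instance twin_pair i j = (val i == 0%N)%:R.
Proof.
rewrite dev_twin_pair /binary_target /point_mass.
case: (_ == 0%N); case: j => [[|[|//]]] _ /=;
  by rewrite ?subrr ?subr0 ?sub0r ?normrN ?normr1 ?normr0.
Qed.

Lemma binary_dev_mixed_pair i j : dev binary_twin_instance mixed_pair i j = 2^-1.
Proof.
rewrite dev_mixed_pair /binary_target /point_mass.
case: (_ == 0%N); case: j => [[|[|//]]] _ /=; rewrite ?add0n ?addn0.
all: by [rewrite ger0_norm; lra | rewrite ler0_norm; lra].
Qed.

End BinaryTwinInstance.

Section BinaryTwinLosses.
Variables (R : realFieldType) (p : nat).
Let I := binary_twin_instance R p.+1.

Lemma loss1_binary_twin_pair : loss1 I twin_pair = 2.
Proof.
rewrite /loss1; under eq_bigr do under eq_bigr do rewrite binary_dev_twin_pair.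
rewrite big_ord_recl [X in _ + X]big1 => [|i _]; last by rewrite big1.
by rewrite sumr_const card_ord addr0.
Qed.

Lemma loss1_binary_mixed_pair : loss1 I mixed_pair = p.+1%:R.
Proof.
rewrite /loss1; under eq_bigr do under eq_bigr do rewrite binary_dev_mixed_pair.
by rewrite /= !sumr_const !card_ord -[2^-1 *+ 2]mulr_natr mulVf ?pnatr_eq0.
Qed.

Lemma lossmax_binary_twin_pair : lossmax I twin_pair = 1.
Proof.
rewrite /lossmax; under eq_bigr do under eq_bigr do rewrite binary_dev_twin_pair.
under eq_bigr do rewrite bigmax_cst ?ler0n //.
apply/le_anti; rewrite bigmax_le ?ler01 //=; last by move=> i _; case: (_ == _).
exact: (le_bigmax _ (fun i : 'I_p.+1 => (val i == 0%N)%:R) ord0).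
Qed.

Lemma lossmax_binary_mixed_pair : lossmax I mixed_pair = 2^-1.
Proof.
have half_ge0 : 0 <= 2^-1 :> R by rewrite invr_ge0 ler0n.
rewrite /lossmax; under eq_bigr do under eq_bigr do rewrite binary_dev_mixed_pair.
by under eq_bigr do rewrite bigmax_cst //; rewrite bigmax_cst.
Qed.

Lemma loss1max_binary_twin_pair : loss1max I twin_pair = 1.
Proof.
rewrite /loss1max; under eq_bigr do under eq_bigr do rewrite binary_dev_twin_pair.
under eq_bigr do rewrite bigmax_cst ?ler0n //.
by rewrite big_ord_recl big1 ?addr0.
Qed.

Lemma loss1max_binary_mixed_pair : loss1max I mixed_pair = p.+1%:R / 2.
Proof.
have half_ge0 : 0 <= 2^-1 :> R by rewrite invr_ge0 ler0n.
rewrite /loss1max; under eq_bigr do under eq_bigr do rewrite binary_dev_mixed_pair.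
under eq_bigr do rewrite bigmax_cst //.
by rewrite sumr_const card_ord -[_ *+ _]mulr_natl.
Qed.

End BinaryTwinLosses.

Section QuaternaryTwinInstance.
Variables (R : realFieldType) (p : nat).

Definition quaternary_twin (i : 'I_p) : 'I_4 :=
  if (val i <= 1)%N then @Ordinal 4 1 isT else ord0.

Definition quaternary_odd (i : 'I_p) : 'I_4 :=
  if val i == 0%N then ord_max else ord0.

Definition quaternary_target (i : 'I_p) (j : 'I_4) : R :=
  if val i == 0%N then [:: 1/2; 1/4; 1/4; 0]`_j
  else if val i == 1%N then [:: 3/16; 13/16; 0; 0]`_j
  else point_mass ord0 j.

Lemma quaternary_target_ge0 i j : 0 <= quaternary_target i j.
Proof.
rewrite /quaternary_target.
case: (val i == 0%N); [|case: (val i == 1%N); last exact: point_mass_ge0].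
all: by case: j => [[|[|[|[|m]]]] ?] /=; rewrite ?nth_nil; lra.
Qed.

Lemma quaternary_target_sum1 i : \sum_j quaternary_target i j = 1.
Proof.
rewrite /quaternary_target.
case: (val i == 0%N); [|case: (val i == 1%N); last exact: point_mass_sum1].
all: by rewrite !big_ord_recl big_ord0 /=; lra.
Qed.

Definition quaternary_twin_instance : instance R p :=
  twin_instance (q := fun=> 4%N) quaternary_twin quaternary_odd quaternary_target
    quaternary_target_ge0 quaternary_target_sum1.

End QuaternaryTwinInstance.

Section QuaternaryTwinLosses.
Variables (R : realFieldType) (p : nat).
Let I := quaternary_twin_instance R p.+2.

Lemma quaternary_dev_padding A (i : 'I_p) j : is_committee I A ->
  dev I A (lift ord0 (lift ord0 i)) j = 0.
Proof.
by move=> A_com; apply: dev_twin_consensus.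
Qed.

Lemma loss1_quaternary A : is_committee I A ->
  loss1 I A = \sum_j dev I A ord0 j + \sum_j dev I A (lift ord0 ord0) j.
Proof.
move=> A_com; rewrite /loss1 2!big_ord_recl [X in _ + (_ + X)]big1 ?addr0 // => i _.
by rewrite big1 // => j _; apply: quaternary_dev_padding.
Qed.

Lemma loss1max_quaternary A : is_committee I A ->
  loss1max I A = \big[Num.max/0]_j dev I A ord0 j
                 + \big[Num.max/0]_j dev I A (lift ord0 ord0) j.
Proof.
move=> A_com; rewrite /loss1max 2!big_ord_recl [X in _ + (_ + X)]big1 ?addr0 // => i _.
by apply: bigmax_eq_id => j _; rewrite quaternary_dev_padding.
Qed.

Lemma loss1_quaternary_twin_pair : loss1 I twin_pair = 15/8.
Proof.
rewrite loss1_quaternary; last exact: twin_pair_committee.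
rewrite !big_ord_recl !big_ord0 !dev_twin_pair /quaternary_target /=.
by rewrite !sub0r !normrN !ger0_norm; lra.
Qed.

Lemma loss1_quaternary_mixed_pair : loss1 I mixed_pair = 17/8.
Proof.
rewrite loss1_quaternary; last exact: mixed_pair_committee.
rewrite !big_ord_recl !big_ord0 !dev_mixed_pair /quaternary_target /=.
rewrite [`|_ - 13 / 16|]distrC !mul0r !sub0r !normrN !ger0_norm; lra.
Qed.

Lemma loss1max_quaternary_mixed_pair_le : loss1max I mixed_pair <= 13/16.
Proof.
rewrite loss1max_quaternary; last exact: mixed_pair_committee.
have -> : 13/16 = 1/2 + 5/16 :> R by lra.
apply: lerD; apply: bigmax_le => [|j _]; try lra.
all: rewrite dev_mixed_pair /quaternary_target; case: j => [[|[|[|[|m]]]] ?] /=.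
all: by rewrite ?nth_nil ler_norml; lra.
Qed.

Lemma loss1max_quaternary_twin_pair_ge : 15/16 <= loss1max I twin_pair.
Proof.
rewrite loss1max_quaternary; last exact: twin_pair_committee.
have -> : 15/16 = 3/4 + 3/16 :> R by lra.
apply: lerD; [apply: le_trans (le_bigmax _ _ (lift ord0 ord0))
             | apply: le_trans (le_bigmax _ _ ord0)].
all: by rewrite dev_twin_pair /quaternary_target /= ?sub0r ?normrN ger0_norm; lra.
Qed.

End QuaternaryTwinLosses.

Section Separations.
Variable R : realFieldType.

Lemma binary_loss1_lossmax_disjoint p (I := binary_twin_instance R p.+3) A :
  ~ (optimal I (loss1 I) A /\ optimal I (lossmax I) A).
Proof.
apply: twin_optimal_disjoint.
- exact: loss1_ratio_determined.
- exact: lossmax_ratio_determined.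
- by rewrite loss1_binary_twin_pair loss1_binary_mixed_pair ltr_nat.
- by rewrite lossmax_binary_twin_pair lossmax_binary_mixed_pair; lra.
Qed.

Lemma binary_lossmax_loss1max_disjoint p (I := binary_twin_instance R p.+3) A :
  ~ (optimal I (lossmax I) A /\ optimal I (loss1max I) A).
Proof.
move=> /and_comm; apply: twin_optimal_disjoint.
- exact: loss1max_ratio_determined.
- exact: lossmax_ratio_determined.
- rewrite loss1max_binary_twin_pair loss1max_binary_mixed_pair.
  have : 3 <= p.+3%:R :> R by rewrite ler_nat.
  lra.
- by rewrite lossmax_binary_twin_pair lossmax_binary_mixed_pair; lra.
Qed.

Lemma quaternary_loss1_loss1max_disjoint p (I := quaternary_twin_instance R p.+2) A :
  ~ (optimal I (loss1 I) A /\ optimal I (loss1max I) A).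
Proof.
apply: twin_optimal_disjoint.
- exact: loss1_ratio_determined.
- exact: loss1max_ratio_determined.
- by rewrite loss1_quaternary_twin_pair loss1_quaternary_mixed_pair; lra.
- have := loss1max_quaternary_mixed_pair_le R p.
  have := loss1max_quaternary_twin_pair_ge R p.
  lra.
Qed.

Lemma binary_twin_pair_loss1_not_lossmax (I := binary_twin_instance R 2) :
  optimal I (loss1 I) twin_pair /\ ~ optimal I (lossmax I) twin_pair.
Proof.
split.
  apply: twin_pair_optimal; first exact: loss1_ratio_determined.
  by rewrite loss1_binary_twin_pair loss1_binary_mixed_pair.
move=> [_ /(_ mixed_pair mixed_pair_committee)].
by rewrite lossmax_binary_twin_pair lossmax_binary_mixed_pair; lra.
Qed.

End Separations.

Theorem proposition2 (R : realType) :
  (* (1) *)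
  (forall p : nat, (3 <= p)%N ->
    exists I : instance R p, binary_instance I /\ k I = 2%N /\
      forall A, ~ (optimal I (loss1 I) A /\ optimal I (lossmax I) A)) /\
  (* (2) *)
  (forall p : nat, (3 <= p)%N ->
    exists I : instance R p,
      forall A, ~ (optimal I (lossmax I) A /\ optimal I (loss1max I) A)) /\
  (* (3) *)
  (forall p : nat, (2 <= p)%N ->
    exists I : instance R p, (exists i, q I i = 4%N) /\
      forall A, ~ (optimal I (loss1 I) A /\ optimal I (loss1max I) A)) /\
  (* (4) *)
  (exists I : instance R 2, binary_instance I /\
      exists A, ~ (optimal I (loss1 I) A <-> optimal I (lossmax I) A)).
Proof.
split; [|split; [|split]].
- case=> [|[|[|p]]] // _; exists (binary_twin_instance R p.+3).
  by do 2!split=> //; exact: binary_loss1_lossmax_disjoint.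
- case=> [|[|[|p]]] // _; exists (binary_twin_instance R p.+3).
  exact: binary_lossmax_loss1max_disjoint.
- case=> [|[|p]] // _; exists (quaternary_twin_instance R p.+2).
  by split; [exists ord0 | exact: quaternary_loss1_loss1max_disjoint].
- exists (binary_twin_instance R 2); split=> //; exists twin_pair.
  have [loss1_opt lossmax_not_opt] := binary_twin_pair_loss1_not_lossmax R.
  by move=> /iffLR/(_ loss1_opt)/lossmax_not_opt.
Qed.
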